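(* Consider a sovereign ZK rollup and suppose the recursive proof system used by the rollup is complete and sound. Then, if a claimed state root for a new rollup block is accepted by a light client, it is the valid state root corresponding to the sequence of transactions within the latest rollup block and its prefix with overwhelming probability.
   Context: A rollup's parent chain is a blockchain that orders rollup transactions (without executing them); full nodes group the rollup transactions into a chain of rollup blocks, each with a transaction root and a state root, where the state root of a block is the binding commitment $\langle\delta^*(\mathsf{st}_0,\overline{\mathrm{tx}})\rangle$ to the state obtained by applying, via the transition function $\delta$ starting from the genesis state $\mathsf{st}_0$, all transactions $\overline{\mathrm{tx}}$ in the block and its prefix. In a sovereign ZK rollup there is no contract on the parent chain checking the state; full nodes maintain a root (commitment) of the whole rollup transaction history and a recursive validity proof, and a light client queried for the latest state root receives from a full node the claimed state root, the claimed root of the transaction history and a proof, which it verifies using as public inputs these two roots and selected rollup data on the parent chain; it accepts the state root iff the proof verifies. The recursive proof system is complete if the verifier always accepts proofs for valid roots, and sound if no PPT adversary can produce an accepted proof for an invalid root except with probability negligible in the security parameter $\lambda$. ''Overwhelming probability'' means except with probability negligible in $\lambda$. *)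

From mathcomp Require Import all_boot all_order all_algebra.
Set Implicit Arguments. Unset Strict Implicit. Unset Printing Implicit Defensive.
Import Order.TTheory GRing.Theory Num.Theory.
Local Open Scope ring_scope.

(* A randomized algorithm indexed by the security parameter k : on parameter k
   it flips [clen k] fair coins and outputs a value of type [Out]. *)
Record adversary (Out : Type) := Adversary {
  clen : nat -> nat;
  run  : forall k : nat, {ffun 'I_(clen k) -> bool} -> Out }.

Definition prob (n : nat) (E : pred {ffun 'I_n -> bool}) : rat :=
  (#|E|%:R / (2 ^ n)%:R)%R.

Definition Pr (Out : Type) (A : adversary Out) (k : nat) (P : Out -> bool) : rat :=
  @prob (clen A k) (fun r => P (@run Out A k r)).

Definition negligible (f : nat -> rat) : Prop :=
  forall c : nat, exists N : nat, forall k : nat, (N <= k)%N ->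
    `|f k| <= ((k%:R : rat) ^+ c)^-1.

Definition delta_star (St Tx : Type) (delta : St -> Tx -> St) (st0 : St)
  (txs : seq Tx) : St := foldl delta st0 txs.

Section Rollup.
Variables (Tx St Data Proof : Type) (Root : eqType).
Variables (delta : St -> Tx -> St) (st0 : St).
Variable commitS : nat -> St -> Root.
Variable troot : nat -> seq Tx -> Root.
(* blocks d = the chain of rollup blocks (each a sequence of rollup
   transactions) that full nodes obtain from the rollup transactions ordered
   on the parent chain as described by parent-chain data d; the last one is
   the latest rollup block. *)
Variable blocks : Data -> seq (seq Tx).
(* verify k sr tr d pi : recursive-proof verifier with public inputs the
   claimed state root sr, the claimed transaction-history root tr and the
   selected parent-chain rollup data d. *)
Variable verify : nat -> Root -> Root -> Data -> Proof -> bool.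
Variable prove : nat -> Root -> Root -> Data -> Proof.

Definition history (d : Data) : seq Tx := flatten (blocks d).

Definition valid_state_root (k : nat) (d : Data) : Root :=
  commitS k (delta_star delta st0 (history d)).

Definition valid_roots (k : nat) (d : Data) (sr tr : Root) : bool :=
  (sr == valid_state_root k d) && (tr == troot k (history d)).

Definition complete : Prop :=
  forall k d sr tr, valid_roots k d sr tr -> verify k sr tr d (prove k sr tr d).

Definition sound (PPT : adversary (Data * (Root * Root * Proof)) -> Prop) : Prop :=
  forall A, PPT A ->
    negligible (fun k => Pr A k (fun o =>
      let: (d, (sr, tr, pi)) := o in verify k sr tr d pi && ~~ valid_roots k d sr tr)).

Definition light_client (k : nat) (d : Data) (ans : Root * Root * Proof)
  : option Root :=
  let: (sr, tr, pi) := ans in if verify k sr tr d pi then Some sr else None.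

Definition accepts_invalid (k : nat) (o : Data * (Root * Root * Proof)) : bool :=
  let: (d, ans) := o in
  if light_client k d ans is Some sr then sr != valid_state_root k d else false.
End Rollup.

From mathcomp Require Import all_boot all_order all_algebra.
Import Order.TTheory GRing.Theory Num.Theory.
Local Open Scope ring_scope.

(* If the light client accepts a state root other than the valid one, the
   proof it was given verifies although the pair of roots is invalid; so the
   failure probability of the light client is bounded by the soundness error
   of the proof system, which is negligible. *)

Lemma prob_ge0 (n : nat) (E : pred {ffun 'I_n -> bool}) : 0 <= prob E.
Proof. by rewrite divr_ge0 ?ler0n. Qed.

Lemma le_prob (n : nat) (E F : pred {ffun 'I_n -> bool}) :
  (forall r, E r -> F r) -> prob E <= prob F.
Proof.
move=> EF; rewrite /prob ler_pM2r ?invr_gt0 ?ltr0n ?expn_gt0 // ler_nat.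
by apply/subset_leq_card/subsetP => r; apply: EF.
Qed.

Lemma le_Pr (Out : Type) (A : adversary Out) (k : nat) (P Q : pred Out) :
  (forall o, P o -> Q o) -> Pr A k P <= Pr A k Q.
Proof. by move=> PQ; apply: le_prob => r; apply: PQ. Qed.

Lemma negligible_le (f g : nat -> rat) :
  (forall k, 0 <= f k <= g k) -> negligible g -> negligible f.
Proof.
move=> fg g_negl c; have [N gN] := g_negl c; exists N => k /gN.
have /andP[f_ge0 fg_k] := fg k.
by apply: le_trans; rewrite ger0_norm // ger0_norm // (le_trans f_ge0).
Qed.

Lemma accepts_invalid_verify
  (Tx St Data Proof : Type) (Root : eqType)
  (delta : St -> Tx -> St) (st0 : St)
  (commitS : nat -> St -> Root) (troot : nat -> seq Tx -> Root)
  (blocks : Data -> seq (seq Tx))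
  (verify : nat -> Root -> Root -> Data -> Proof -> bool)
  (k : nat) (d : Data) (sr tr : Root) (pi : Proof) :
  accepts_invalid delta st0 commitS blocks verify k (d, (sr, tr, pi)) ->
  verify k sr tr d pi
  && ~~ valid_roots delta st0 commitS troot blocks k d sr tr.
Proof.
rewrite /accepts_invalid /light_client /valid_roots.
by case: (verify k sr tr d pi) => //= /negbTE ->.
Qed.

Theorem lemma4
  (Tx St Data Proof : Type) (Root : eqType)
  (delta : St -> Tx -> St) (st0 : St)
  (commitS : nat -> St -> Root) (troot : nat -> seq Tx -> Root)
  (blocks : Data -> seq (seq Tx))
  (verify : nat -> Root -> Root -> Data -> Proof -> bool)
  (prove : nat -> Root -> Root -> Data -> Proof)
  (PPT : adversary (Data * (Root * Root * Proof)) -> Prop) :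
  complete delta st0 commitS troot blocks verify prove ->
  sound delta st0 commitS troot blocks verify PPT ->
  forall A : adversary (Data * (Root * Root * Proof)), PPT A ->
    negligible (fun k =>
      Pr A k (accepts_invalid delta st0 commitS blocks verify k)).
Proof.
(* Completeness only guarantees that valid roots are accepted. *)
move=> _ sound_verify A PPT_A.
apply: negligible_le (sound_verify A PPT_A) => k.
rewrite prob_ge0 /=; apply: le_Pr => -[d [[sr tr] pi]].
exact: accepts_invalid_verify.
Qed.
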